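(* Let $\Omega\subset\mathbb{R}^d$ be a compact set, $\mu$ a positive finite measure on $\Omega$ with $\mu(\Omega)>0$, and $n\ge 0$ an integer. Let $S(f)=\sum_{i=1}^M w_i f(\mathbf{x}_i)$ be a cubature rule with nodes $\mathbf{x}_i\in\Omega$ and positive weights $w_i>0$. Let $\{\phi_j\}_{j=1}^{d_n}$ be a $\mu$-orthonormal basis of $\mathbb{P}_n$ (polynomials of total degree at most $n$, $d_n=\dim\mathbb{P}_n$), and let $G=(S(\phi_i\phi_j))_{1\le i,j\le d_n}$. Suppose there are constants $A>0$, $B>0$ such that $$A\,\|p\|_{L^2}^2\le S(p^2)\le B\,\|p\|_{L^2}^2\quad\text{for all }p\in\mathbb{P}_n,$$ where $\|p\|_{L^2}^2=\int_\Omega p^2\,d\mu$, and that $\eta:=\max\{|A-1|,|B-1|\}<1$. For $f\in C(\Omega)$ define the weighted least-squares polynomial $$\mathcal{G}_nf=\sum_{j=1}^{d_n}c_j\phi_j,\qquad (c_1,\dots,c_{d_n})^T=G^{-1}\bigl(S(f\phi_1),\dots,S(f\phi_{d_n})\bigr)^T.$$ Then for every $f\in C(\Omega)$, $$\|f-\mathcal{G}_nf\|_{L^2}\le\Bigl(1+\sqrt{\mathrm{cond}_2(G)}\Bigr)\sqrt{\mu(\Omega)}\,E_n(f)\le\Bigl(1+\sqrt{\tfrac{1+\eta}{1-\eta}}\Bigr)\sqrt{\mu(\Omega)}\,E_n(f),$$ and, if in addition the rule is exact on constants (i.e. $\sum_{i=1}^M w_i=\mu(\Omega)$), $$\|f-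\mathcal{G}_nf\|_{L^2}\le\Bigl(1+\tfrac{1}{\sqrt{A}}\Bigr)\sqrt{\mu(\Omega)}\,E_n(f)\le\Bigl(1+\tfrac{1}{\sqrt{1-\eta}}\Bigr)\sqrt{\mu(\Omega)}\,E_n(f).$$
   Context: $E_n(f)=\min_{p\in\mathbb{P}_n}\|f-p\|_{\infty}$ is the error of best uniform polynomial approximation of degree $n$ on $\Omega$. $\mathrm{cond}_2(G)=\lambda_{\max}(G)/\lambda_{\min}(G)$ is the spectral condition number of the symmetric positive definite matrix $G$. The $L^2$ norm is taken with respect to $\mu$. *)

From HB Require Import structures.
From mathcomp Require Import all_boot all_order all_algebra.
From mathcomp Require Import all_classical all_reals all_analysis.

Set Implicit Arguments.
Unset Strict Implicit.
Unset Printing Implicit Defensive.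

Import Order.TTheory GRing.Theory Num.Theory.
Import numFieldNormedType.Exports.
Local Open Scope classical_set_scope.
Local Open Scope ring_scope.

Definition Rd (R : realType) (d : nat) := g_sigma_algebraType (@open 'rV[R]_d).

(* P_n : real polynomial functions on R^d of total degree at most n,
   i.e. linear combinations of monomials x^a with |a| = sum_i a_i <= n. *)
Definition polys (R : realType) (d n : nat) : set ('rV[R]_d -> R) :=
  [set p | exists c : {ffun 'I_d -> 'I_n.+1} -> R,
     p = fun x : 'rV[R]_d => \sum_(a : {ffun 'I_d -> 'I_n.+1} | (\sum_(i < d) (a i : nat) <= n)%N)
                    c a * \prod_(i < d) x ord0 i ^+ a i].

Definition L2norm (R : realType) (d : nat) (mu : {measure set (Rd R d) -> \bar R})
  (Om : set 'rV[R]_d) (g : 'rV[R]_d -> R) : R :=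
  Num.sqrt (Rintegral mu Om (fun x => g x ^+ 2)).

Definition cubature (R : realType) (d M : nat) (w : 'I_M -> R) (xs : 'I_M -> 'rV[R]_d)
  (g : 'rV[R]_d -> R) : R := \sum_(i < M) w i * g (xs i).

Definition gram (R : realType) (d M k : nat) (w : 'I_M -> R) (xs : 'I_M -> 'rV[R]_d)
  (phi : 'I_k -> 'rV[R]_d -> R) : 'M[R]_k :=
  \matrix_(i, j) cubature w xs (fun y => phi i y * phi j y).

Definition wls (R : realType) (d M k : nat) (w : 'I_M -> R) (xs : 'I_M -> 'rV[R]_d)
  (phi : 'I_k -> 'rV[R]_d -> R) (f : 'rV[R]_d -> R) : 'rV[R]_d -> R :=
  let c := invmx (gram w xs phi) *m \col_(j < k) cubature w xs (fun y => f y * phi j y) in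
  fun y => \sum_(j < k) c j ord0 * phi j y.

Definition lambda_max (R : realType) (k : nat) (G : 'M[R]_k) : R :=
  sup [set l : R | eigenvalue G l].
Definition lambda_min (R : realType) (k : nat) (G : 'M[R]_k) : R :=
  inf [set l : R | eigenvalue G l].
Definition cond2 (R : realType) (k : nat) (G : 'M[R]_k) : R :=
  lambda_max G / lambda_min G.

Definition best_approx_err (R : realType) (d n : nat) (Om : set 'rV[R]_d)
  (f : 'rV[R]_d -> R) : R :=
  inf [set sup [set `|f x - p x| | x in Om] | p in @polys R d n].

(* Fix any polynomial p of degree n and put g = f - p, so that |g| <= E on
   Omega with E = sup |f - p|.  The operator G_n reproduces polynomials, hence
   f - G_n f = g - G_n g and ||f - G_n f|| <= ||g|| + ||G_n g||, where
   ||g|| <= sqrt(mu(Omega)) E.  For the discrete semi-inner product S(u v),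
   G_n g is the orthogonal projection of g onto P_n, so
   S((G_n g)^2) <= S(g^2) <= (sum_i w_i) E^2.  Writing G_n g = sum_j c_j phi_j,
   orthonormality gives ||G_n g||^2 = |c|^2 while S((G_n g)^2) = c^T G c
   >= lambda_min |c|^2.  Finally sum_i w_i = S(1) <= lambda_max mu(Omega), with
   equality to mu(Omega) for rules exact on constants, and the norm
   equivalence confines the Rayleigh quotient of G, whose extreme values are
   lambda_min and lambda_max, to [A, B], a subset of [1 - eta, 1 + eta].
   Taking the infimum over p gives the bounds in terms of E_n(f). *)

From HB Require Import structures.
From mathcomp Require Import all_boot all_order all_algebra.
From mathcomp Require Import all_classical all_reals all_analysis.
From mathcomp Require Import ring lra.
Import Order.TTheory GRing.Theory Num.Theory.
Import numFieldNormedType.Exports.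
Local Open Scope classical_set_scope.
Local Open Scope ring_scope.

Set Implicit Arguments.
Unset Strict Implicit.
Unset Printing Implicit Defensive.

Lemma quadratic_ge0_discr (R : realFieldType) (a b c : R) : 0 <= c ->
  (forall t, 0 <= a + 2 * t * b + t ^+ 2 * c) -> b ^+ 2 <= a * c.
Proof.
move=> c_ge0 hq; have [c0|c_neq0] := eqVneq c 0.
  rewrite c0 mulr0; have [->|b_neq0] := eqVneq b 0; first by rewrite expr0n.
  have := hq (- (a + 1) / (2 * b)); rewrite c0 mulr0 addr0.
  have -> : 2 * (- (a + 1) / (2 * b)) * b = - (a + 1) by field; rewrite b_neq0.
  lra.
have c_gt0 : 0 < c by rewrite lt_def c_neq0.
have := hq (- b / c).
have -> : a + 2 * (- b / c) * b + (- b / c) ^+ 2 * c = a - b ^+ 2 / c by field.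
by rewrite subr_ge0 ler_pdivrMr.
Qed.

Section QuadraticForms.
Variables (R : realFieldType) (k : nat).
Implicit Types (H : 'M[R]_k) (u v : 'rV[R]_k).

Definition bform H u v : R := (u *m H *m v^T) 0 0.
Definition qform H v : R := bform H v v.
Definition sqnorm v : R := \sum_i v 0 i ^+ 2.

Lemma bformC H u v : H^T = H -> bform H u v = bform H v u.
Proof.
move=> H_sym; rewrite /bform.
have -> : (u *m H *m v^T) 0 0 = ((u *m H *m v^T)^T) 0 0 by rewrite [RHS]mxE.
by rewrite !trmx_mul trmxK H_sym mulmxA.
Qed.

Lemma bformDl H u1 u2 v : bform H (u1 + u2) v = bform H u1 v + bform H u2 v.
Proof. by rewrite /bform !mulmxDl mxE. Qed.

Lemma bformDr H u v1 v2 : bform H u (v1 + v2) = bform H u v1 + bform H u v2.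
Proof. by rewrite /bform linearD /= mulmxDr mxE. Qed.

Lemma bformZl H a u v : bform H (a *: u) v = a * bform H u v.
Proof. by rewrite /bform -!scalemxAl mxE. Qed.

Lemma bformZr H a u v : bform H u (a *: v) = a * bform H u v.
Proof. by rewrite /bform linearZ /= -scalemxAr mxE. Qed.

Lemma bform_delta H v j : bform H v (delta_mx 0 j) = (v *m H) 0 j.
Proof. by rewrite /bform trmx_delta -colE mxE. Qed.

Lemma qform_delta H j : qform H (delta_mx 0 j) = H j j.
Proof. by rewrite /qform bform_delta -rowE mxE. Qed.

Lemma qform0 H : qform H 0 = 0.
Proof. by rewrite /qform /bform !mul0mx mxE. Qed.

Lemma qformB H1 H2 v : qform (H1 - H2) v = qform H1 v - qform H2 v.
Proof. by rewrite /qform /bform mulmxBr mulmxBl [LHS]mxE [X in _ + X]mxE. Qed.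

Lemma mulmx_tr_sqnorm v : (v *m v^T) 0 0 = sqnorm v.
Proof. by rewrite mxE; apply: eq_bigr => i _; rewrite mxE expr2. Qed.

Lemma qform_scalar a v : qform a%:M v = a * sqnorm v.
Proof. by rewrite /qform /bform mul_mx_scalar -scalemxAl mxE mulmx_tr_sqnorm. Qed.

Lemma qform_eigen H a v : v *m H = a *: v -> qform H v = a * sqnorm v.
Proof. by move=> vH; rewrite /qform /bform vH -scalemxAl mxE mulmx_tr_sqnorm. Qed.

Lemma sqnorm_ge0 v : 0 <= sqnorm v.
Proof. by apply: sumr_ge0 => i _; exact: sqr_ge0. Qed.

Lemma sqnorm0 : sqnorm 0 = 0.
Proof. by rewrite /sqnorm big1 // => i _; rewrite mxE expr0n. Qed.

Lemma sqnorm_gt0 v : v != 0 -> 0 < sqnorm v.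
Proof.
move=> /rV0Pn [i vi]; rewrite lt_def sqnorm_ge0 andbT psumr_eq0; last first.
  by move=> j _; exact: sqr_ge0.
by apply/allPn; exists i; rewrite ?mem_index_enum //= sqrf_eq0.
Qed.

Lemma bform_sqr_le H u v : H^T = H -> (forall x, 0 <= qform H x) ->
  bform H u v ^+ 2 <= qform H u * qform H v.
Proof.
move=> H_sym H_psd; apply: quadratic_ge0_discr => [|t]; first exact: H_psd.
have := H_psd (u + t *: v).
rewrite /qform bformDl !bformDr !bformZl !bformZr (@bformC H v u) //.
by congr (0 <= _); ring.
Qed.

End QuadraticForms.

Section PsdSingular.
Variables (R : rcfType) (k : nat) (H : 'M[R]_k).
Hypotheses (H_sym : H^T = H) (H_psd : forall v, 0 <= qform H v).

Lemma psd_mulmx_entry_le v j :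
  `|(v *m H) 0 j| <= Num.sqrt (H j j) * Num.sqrt (qform H v).
Proof.
have Hjj_ge0 : 0 <= H j j by rewrite -qform_delta.
rewrite -sqrtrM // -sqrtr_sqr ler_sqrt; last exact: mulr_ge0.
by rewrite -bform_delta -qform_delta mulrC bform_sqr_le.
Qed.

Lemma unit_psd_coercive : H \in unitmx ->
  exists2 K, 0 <= K & forall v, sqnorm v <= K * qform H v.
Proof.
move=> H_unit; pose c i := \sum_j Num.sqrt (H j j) * `|invmx H j i|.
have c_ge0 i : 0 <= c i by apply: sumr_ge0 => j _; exact: mulr_ge0.
exists (\sum_i c i ^+ 2); first by apply: sumr_ge0 => i _; exact: sqr_ge0.
move=> v; have v_le i : `|v 0 i| <= c i * Num.sqrt (qform H v).
  rewrite -[in v 0 i](mulmxK H_unit v) mxE mulr_suml.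
  apply: le_trans (ler_norm_sum _ _ _) _; apply: ler_sum => j _.
  by rewrite normrM mulrAC ler_wpM2r // psd_mulmx_entry_le.
rewrite /sqnorm mulr_suml; apply: ler_sum => i _.
rewrite -real_normK ?num_real // -[qform H v]sqr_sqrtr // -exprMn.
by rewrite lerXn2r ?nnegrE ?mulr_ge0 ?sqrtr_ge0.
Qed.

Lemma psd_singular :
  (forall e, 0 < e -> exists2 v : 'rV[R]_k, v != 0 & qform H v < e * sqnorm v) ->
  exists2 v : 'rV[R]_k, v != 0 & v *m H = 0.
Proof.
move=> small; apply: contrapT => kerH0.
have H_unit : H \in unitmx.
  rewrite -row_free_unit; apply: inj_row_free => v vH; apply: contrapT => v_neq0.
  by apply: kerH0; exists v => //; apply/eqP.
have [K K_ge0 coerc] := unit_psd_coercive H_unit.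
have e_gt0 : 0 < (K + 1)^-1 by rewrite invr_gt0 ltr_wpDl.
have [v v_neq0 qv] := small _ e_gt0.
have Kq : K * qform H v <= K * (K + 1)^-1 * sqnorm v.
  by rewrite -mulrA ler_wpM2l // ltW.
have K_lt1 : K * (K + 1)^-1 < 1 by rewrite ltr_pdivrMr ?ltr_wpDl // mul1r ltrDl.
have := sqnorm_gt0 v_neq0; have := coerc v; nra.
Qed.

End PsdSingular.

Section Rayleigh.
Variables (R : realType) (k : nat) (G : 'M[R]_k) (A B : R).
Hypotheses (k_gt0 : (0 < k)%N) (G_sym : G^T = G)
  (G_ge : forall v, A * sqnorm v <= qform G v)
  (G_le : forall v, qform G v <= B * sqnorm v).

Definition rayleigh := [set qform G v / sqnorm v | v in [set v : 'rV[R]_k | v != 0]].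
Definition rayleigh_min := inf rayleigh.
Definition rayleigh_max := sup rayleigh.

Lemma rayleigh_neq0 : rayleigh !=set0.
Proof.
pose e : 'rV[R]_k := delta_mx 0 (Ordinal k_gt0).
exists (qform G e / sqnorm e); exists e => //=.
by apply/rV0Pn; exists (Ordinal k_gt0); rewrite mxE !eqxx oner_neq0.
Qed.

Lemma rayleigh_lbound : lbound rayleigh A.
Proof. by move=> _ [v /= /sqnorm_gt0 v_gt0 <-]; rewrite ler_pdivlMr. Qed.

Lemma rayleigh_ubound : ubound rayleigh B.
Proof. by move=> _ [v /= /sqnorm_gt0 v_gt0 <-]; rewrite ler_pdivrMr. Qed.

Lemma rayleigh_min_le v : rayleigh_min * sqnorm v <= qform G v.
Proof.
have [->|v_neq0] := eqVneq v 0; first by rewrite qform0 sqnorm0 mulr0.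
rewrite -ler_pdivlMr ?sqnorm_gt0 //; apply: ge_inf; last by exists v.
by exists A; exact: rayleigh_lbound.
Qed.

Lemma rayleigh_max_ge v : qform G v <= rayleigh_max * sqnorm v.
Proof.
have [->|v_neq0] := eqVneq v 0; first by rewrite qform0 sqnorm0 mulr0.
rewrite -ler_pdivrMr ?sqnorm_gt0 //; apply: ub_le_sup; last by exists v.
by exists B; exact: rayleigh_ubound.
Qed.

Lemma ge_rayleigh_min : A <= rayleigh_min.
Proof. exact: lb_le_inf rayleigh_neq0 rayleigh_lbound. Qed.

Lemma rayleigh_max_le : rayleigh_max <= B.
Proof. exact: ge_sup rayleigh_neq0 rayleigh_ubound. Qed.

Lemma eigenvalue_of_psd_singular l :
  (exists2 v : 'rV[R]_k, v != 0 & v *m (G - l%:M) = 0) -> eigenvalue G l.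
Proof.
move=> [v v_neq0 vGl]; apply/eigenvalueP; exists v => //.
by apply/eqP; rewrite -subr_eq0 -mul_mx_scalar -mulmxBr vGl.
Qed.

(* The infimum of the Rayleigh quotient is attained since G - rayleigh_min
   is positive semidefinite with arbitrarily small Rayleigh quotients. *)
Lemma eigenvalue_rayleigh_min : eigenvalue G rayleigh_min.
Proof.
apply: eigenvalue_of_psd_singular; apply: psd_singular.
- by rewrite linearB /= tr_scalar_mx G_sym.
- by move=> v; rewrite qformB qform_scalar subr_ge0 rayleigh_min_le.
move=> e e_gt0.
have [_ [v /= v_neq0 <-] ltv] :=
  inf_adherent e_gt0 (conj rayleigh_neq0 (ex_intro _ A rayleigh_lbound)).
exists v => //; move: ltv; rewrite ltr_pdivrMr ?sqnorm_gt0 // mulrDl.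
rewrite qformB qform_scalar; lra.
Qed.

Lemma eigenvalue_rayleigh_max : eigenvalue G rayleigh_max.
Proof.
have [v v_neq0 vGl] : exists2 v : 'rV[R]_k, v != 0 & v *m (rayleigh_max%:M - G) = 0.
  apply: psd_singular.
  - by rewrite linearB /= tr_scalar_mx G_sym.
  - by move=> v; rewrite qformB qform_scalar subr_ge0 rayleigh_max_ge.
  move=> e e_gt0.
  have [_ [v /= v_neq0 <-] ltv] :=
    sup_adherent e_gt0 (conj rayleigh_neq0 (ex_intro _ B rayleigh_ubound)).
  exists v => //; move: ltv; rewrite ltr_pdivlMr ?sqnorm_gt0 // mulrBl.
  rewrite qformB qform_scalar /rayleigh_max; lra.
apply: eigenvalue_of_psd_singular; exists v => //.
by rewrite -opprB mulmxN vGl oppr0.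
Qed.

Lemma eigenvalue_rayleigh_bounds l :
  eigenvalue G l -> rayleigh_min <= l <= rayleigh_max.
Proof.
move=> /eigenvalueP [v /qform_eigen Gv /sqnorm_gt0 v_gt0].
rewrite -[_ <= l](ler_pM2r v_gt0) -[l <= _](ler_pM2r v_gt0) -Gv.
by rewrite rayleigh_min_le rayleigh_max_ge.
Qed.

Lemma rayleigh_min_le_max : rayleigh_min <= rayleigh_max.
Proof. by have /andP[] := eigenvalue_rayleigh_bounds eigenvalue_rayleigh_min. Qed.

Lemma lambda_min_rayleigh : lambda_min G = rayleigh_min.
Proof.
apply/eqP; rewrite eq_le; apply/andP; split.
  apply: ge_inf eigenvalue_rayleigh_min.
  by exists rayleigh_min => l /eigenvalue_rayleigh_bounds /andP[].
apply: lb_le_inf; first by exists rayleigh_min; exact: eigenvalue_rayleigh_min.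
by move=> l /eigenvalue_rayleigh_bounds /andP[].
Qed.

Lemma lambda_max_rayleigh : lambda_max G = rayleigh_max.
Proof.
apply/eqP; rewrite eq_le; apply/andP; split.
  apply: ge_sup; first by exists rayleigh_max; exact: eigenvalue_rayleigh_max.
  by move=> l /eigenvalue_rayleigh_bounds /andP[].
apply: ub_le_sup eigenvalue_rayleigh_max.
by exists rayleigh_max => l /eigenvalue_rayleigh_bounds /andP[].
Qed.

Lemma cond2_rayleigh : cond2 G = rayleigh_max / rayleigh_min.
Proof. by rewrite /cond2 lambda_min_rayleigh lambda_max_rayleigh. Qed.

End Rayleigh.

Lemma sqr_le_of_norm_le (R : realDomainType) (x E : R) : `|x| <= E -> x ^+ 2 <= E ^+ 2.
Proof.
move=> xE; rewrite -real_normK ?num_real //.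
by rewrite lerXn2r ?nnegrE // (le_trans _ xE).
Qed.

Lemma sqrtr_le_mul (R : rcfType) (a N E : R) : 0 <= a -> 0 <= E ->
  N <= a * E ^+ 2 -> Num.sqrt N <= Num.sqrt a * E.
Proof.
move=> a_ge0 E_ge0 NE; rewrite -(ger0_norm E_ge0) -sqrtr_sqr -sqrtrM //.
by rewrite ler_sqrt // mulr_ge0 ?sqr_ge0.
Qed.

(* The triangle inequality for a semi-inner product, with X = <g, g>,
   Y = <g, q> and Z = <q, q>. *)
Lemma sqrtr_quad_le (R : rcfType) (X Y Z : R) : 0 <= X -> 0 <= Z ->
  Y ^+ 2 <= X * Z -> Num.sqrt (X - 2 * Y + Z) <= Num.sqrt X + Num.sqrt Z.
Proof.
move=> X_ge0 Z_ge0 CS.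
have YXZ : - Y <= Num.sqrt X * Num.sqrt Z.
  apply: le_trans (ler_norm (- Y)) _.
  by rewrite normrN -sqrtr_sqr -sqrtrM // ler_sqrt ?mulr_ge0.
rewrite -[leRHS]ger0_norm ?addr_ge0 ?sqrtr_ge0 // -sqrtr_sqr ler_sqrt ?sqr_ge0 //.
rewrite sqrrD !sqr_sqrtr //; lra.
Qed.

Section Polynomials.
Variables (R : realType) (d n : nat).

Lemma polys0 : @polys R d n (fun=> 0).
Proof. by exists (fun=> 0); apply/funext => x; rewrite big1 // => a _; rewrite mul0r. Qed.

Lemma polys1 : @polys R d n (fun=> 1).
Proof.
exists (fun a => (a == [ffun=> ord0])%:R); apply/funext => x.
rewrite (bigD1 [ffun=> ord0]) /=; last by rewrite big1 // => i _; rewrite ffunE.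
rewrite eqxx mul1r [X in _ + X]big1 ?addr0; last first.
  by move=> a /andP[_ /negbTE ->]; rewrite mul0r.
by rewrite big1 // => i _; rewrite ffunE expr0.
Qed.

Lemma polysD p q : polys n p -> polys n q -> @polys R d n (fun x => p x + q x).
Proof.
move=> [c1 ->] [c2 ->]; exists (fun a => c1 a + c2 a); apply/funext => x.
by rewrite -big_split; apply: eq_bigr => a _; rewrite mulrDl.
Qed.

Lemma polysZ a p : polys n p -> @polys R d n (fun x => a * p x).
Proof.
move=> [c ->]; exists (fun b => a * c b); apply/funext => x.
by rewrite mulr_sumr; apply: eq_bigr => b _; rewrite mulrA.
Qed.

Lemma polys_lincomb k (phi : 'I_k -> 'rV[R]_d -> R) (c : 'I_k -> R) :
  (forall j, polys n (phi j)) -> polys n (fun x => \sum_(j < k) c j * phi j x).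
Proof.
move=> phiP; rewrite -fct_sumE.
apply: (big_ind (polys n)); [exact: polys0|exact: polysD|].
by move=> j _; apply: polysZ.
Qed.

End Polynomials.

Section BoundedMeasurable.
Variables (R : realType) (d : nat) (Om : set 'rV[R]_d).

Lemma compact_measurable : compact Om -> measurable (Om : set (Rd R d)).
Proof.
move=> /compact_closed Om_closed; rewrite -(setCK Om); apply: measurableC.
by apply: sub_sigma_algebra; apply: closed_openC; exact: Om_closed.
Qed.

Lemma within_continuous_measurable_fun (g : 'rV[R]_d -> R) : measurable (Om : set (Rd R d)) ->
  {within Om, continuous g} -> measurable_fun (Om : set (Rd R d)) g.
Proof.
move=> mOm /continuousP g_cont.
apply: (measurability _ (measurable_realfun.RGenOpens.measurableE R)).
move=> _ [_ [a [b ->] <-]].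
have /open_subspaceP [V oV VE] :=
  g_cont `]a, b[%classic (@interval_open R (BRight a) (BLeft b) isT isT).
by rewrite setIC -VE; apply: measurableI => //; exact: sub_sigma_algebra.
Qed.

Definition bounded_mfun (g : 'rV[R]_d -> R) :=
  measurable_fun (Om : set (Rd R d)) g /\ exists M, forall x, Om x -> `|g x| <= M.

Lemma bounded_mfun_cst c : bounded_mfun (fun=> c).
Proof. by split; [exact: measurable_cst|exists `|c|]. Qed.

Lemma bounded_mfunD f g :
  bounded_mfun f -> bounded_mfun g -> bounded_mfun (fun x => f x + g x).
Proof.
move=> [mf [M1 f_le]] [mg [M2 g_le]].
split; first exact: measurable_realfun.measurable_funD.
exists (M1 + M2) => x Omx.
by rewrite (le_trans (ler_normD _ _)) // lerD ?f_le ?g_le.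
Qed.

Lemma bounded_mfunM f g :
  bounded_mfun f -> bounded_mfun g -> bounded_mfun (fun x => f x * g x).
Proof.
move=> [mf [M1 f_le]] [mg [M2 g_le]].
split; first exact: measurable_realfun.measurable_funM.
by exists (M1 * M2) => x Omx; rewrite normrM ler_pM ?f_le ?g_le.
Qed.

Lemma bounded_mfunB f g :
  bounded_mfun f -> bounded_mfun g -> bounded_mfun (fun x => f x - g x).
Proof.
move=> bf bg; have := bounded_mfunD bf (bounded_mfunM (bounded_mfun_cst (-1)) bg).
by congr bounded_mfun; apply/funext => x; rewrite mulN1r.
Qed.

Lemma bounded_mfun_sum (I : Type) (r : seq I) (P : pred I) (F : I -> 'rV[R]_d -> R) :
  (forall i, bounded_mfun (F i)) -> bounded_mfun (fun x => \sum_(i <- r | P i) F i x).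
Proof.
move=> F_bd; rewrite -fct_sumE.
by apply: (big_ind bounded_mfun); [exact: bounded_mfun_cst|exact: bounded_mfunD|].
Qed.

Lemma bounded_mfun_prod (I : Type) (r : seq I) (P : pred I) (F : I -> 'rV[R]_d -> R) :
  (forall i, bounded_mfun (F i)) -> bounded_mfun (fun x => \prod_(i <- r | P i) F i x).
Proof.
move=> F_bd; rewrite -fct_prodE.
by apply: (big_ind bounded_mfun); [exact: bounded_mfun_cst|exact: bounded_mfunM|].
Qed.

Lemma bounded_mfunX g m : bounded_mfun g -> bounded_mfun (fun x => g x ^+ m).
Proof.
move=> bg; elim: m => [|m IHm].
  by under eq_fun do rewrite expr0; exact: bounded_mfun_cst.
by under eq_fun do rewrite exprS; exact: bounded_mfunM.
Qed.

Hypothesis Om_compact : compact Om.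

Lemma bounded_mfun_within g : {within Om, continuous g} -> bounded_mfun g.
Proof.
move=> g_cont; split.
  exact: within_continuous_measurable_fun (compact_measurable Om_compact) g_cont.
have [M [_ gM]] := compact_bounded (continuous_compact g_cont Om_compact).
exists (M + 1) => x Omx; apply: (gM (M + 1)); first by rewrite ltrDl.
by exists x.
Qed.

Lemma bounded_mfun_poly n p : polys n p -> bounded_mfun p.
Proof.
move=> [c ->]; apply: bounded_mfun_sum => a.
apply: bounded_mfunM; first exact: bounded_mfun_cst.
apply: bounded_mfun_prod => i; apply: bounded_mfunX; apply: bounded_mfun_within.
by apply: continuous_subspaceT; exact: coord_continuous.
Qed.

End BoundedMeasurable.

Section L2norm.
Variables (R : realType) (d : nat) (Om : set 'rV[R]_d)
  (mu : {measure set (Rd R d) -> \bar R}).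
Hypotheses (Om_compact : compact Om) (mu_Om_fin : (mu Om < +oo)%E).
Let Om_measurable : measurable (Om : set (Rd R d)) := compact_measurable Om_compact.

Lemma bounded_mfun_integrable g : bounded_mfun Om g -> mu.-integrable Om (EFin \o g).
Proof.
move=> [mg [M gM]]; apply: measurable_bounded_integrable => //.
apply: filterS (nbhs_pinfty_ge (num_real M)) => N MN x Omx.
exact: le_trans (gM _ Omx) MN.
Qed.

Lemma Rintegral_sum (I : Type) (r : seq I) (F : I -> 'rV[R]_d -> R) :
  (forall i, bounded_mfun Om (F i)) ->
  Rintegral mu Om (fun x => \sum_(i <- r) F i x) = \sum_(i <- r) Rintegral mu Om (F i).
Proof.
move=> F_bd; elim: r => [|i r IHr].
  under eq_fun do rewrite big_nil.
  by rewrite big_nil Rintegral_cst // mul0r.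
under eq_fun do rewrite big_cons.
rewrite RintegralD // ?big_cons ?IHr //; apply: bounded_mfun_integrable => //.
exact: bounded_mfun_sum.
Qed.

Lemma Rintegral_sqrDZ g q a : bounded_mfun Om g -> bounded_mfun Om q ->
  Rintegral mu Om (fun x => (g x + a * q x) ^+ 2) =
  Rintegral mu Om (fun x => g x ^+ 2) + 2 * a * Rintegral mu Om (fun x => g x * q x)
  + a ^+ 2 * Rintegral mu Om (fun x => q x ^+ 2).
Proof.
move=> bg bq; have bgq := bounded_mfunM bg bq.
have [bg2 bq2] := (bounded_mfunX 2 bg, bounded_mfunX 2 bq).
have bZ c f : bounded_mfun Om f -> bounded_mfun Om (fun x => c * f x).
  by move=> bf; apply: bounded_mfunM => //; exact: bounded_mfun_cst.
have -> : (fun x => (g x + a * q x) ^+ 2) =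
    (fun x => (g x ^+ 2 + 2 * a * (g x * q x)) + a ^+ 2 * q x ^+ 2).
  by apply/funext => x; ring.
have int f := @bounded_mfun_integrable f.
rewrite RintegralD //; last 2 first.
- exact: int (bounded_mfunD bg2 (bZ _ _ bgq)).
- exact: int (bZ _ _ bq2).
rewrite RintegralD //; [|exact: int|exact: int (bZ _ _ bgq)].
by rewrite !RintegralZl //; exact: int.
Qed.

Lemma L2norm_sqr g : L2norm mu Om g ^+ 2 = Rintegral mu Om (fun x => g x ^+ 2).
Proof. by rewrite sqr_sqrtr // Rintegral_ge0 // => x _; exact: sqr_ge0. Qed.

Lemma L2normB_le g q : bounded_mfun Om g -> bounded_mfun Om q ->
  L2norm mu Om (fun x => g x - q x) <= L2norm mu Om g + L2norm mu Om q.
Proof.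
move=> bg bq; rewrite /L2norm.
have -> : (fun x => (g x - q x) ^+ 2) = (fun x => (g x + (-1) * q x) ^+ 2).
  by apply/funext => x; rewrite mulN1r.
rewrite Rintegral_sqrDZ // mulrN1 sqrrN expr1n mul1r mulNr.
set X := Rintegral mu Om (fun x => g x ^+ 2).
set Y := Rintegral mu Om (fun x => g x * q x).
set Z := Rintegral mu Om (fun x => q x ^+ 2).
have sqr_int_ge0 f : 0 <= Rintegral mu Om (fun x => f x ^+ 2).
  by apply: Rintegral_ge0 => x _; exact: sqr_ge0.
have CS : Y ^+ 2 <= X * Z.
  apply: quadratic_ge0_discr => [|t]; first exact: sqr_int_ge0.
  by rewrite -Rintegral_sqrDZ.
by apply: sqrtr_quad_le => //; exact: sqr_int_ge0.
Qed.

Lemma L2norm_le_sup g E : bounded_mfun Om g -> 0 <= E ->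
  (forall x, Om x -> `|g x| <= E) ->
  L2norm mu Om g <= Num.sqrt (fine (mu Om)) * E.
Proof.
move=> bg E_ge0 gE; apply: sqrtr_le_mul => //.
rewrite mulrC -Rintegral_cst //.
apply: le_Rintegral => //; try apply: bounded_mfun_integrable.
- exact: bounded_mfunX.
- exact: bounded_mfun_cst.
by move=> x /gE; exact: sqr_le_of_norm_le.
Qed.

End L2norm.

Section Cubature.
Variables (R : realType) (d M : nat) (w : 'I_M -> R) (xs : 'I_M -> 'rV[R]_d).

Lemma cubature_sum (I : Type) (r : seq I) (F : I -> 'rV[R]_d -> R) :
  cubature w xs (fun x => \sum_(i <- r) F i x) = \sum_(i <- r) cubature w xs (F i).
Proof. by rewrite /cubature; under eq_bigr do rewrite mulr_sumr; exact: exchange_big. Qed.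

Lemma cubatureZ a g : cubature w xs (fun x => a * g x) = a * cubature w xs g.
Proof. by rewrite /cubature mulr_sumr; apply: eq_bigr => i _; rewrite mulrCA. Qed.

Lemma cubatureB f g :
  cubature w xs (fun x => f x - g x) = cubature w xs f - cubature w xs g.
Proof. by rewrite /cubature -sumrB; apply: eq_bigr => i _; rewrite mulrBr. Qed.

Hypothesis w_ge0 : forall i, 0 <= w i.

Lemma cubature_sqr_ge0 g : 0 <= cubature w xs (fun x => g x ^+ 2).
Proof. by apply: sumr_ge0 => i _; rewrite mulr_ge0 ?sqr_ge0. Qed.

Lemma cubature_sqr_le (Om : set 'rV[R]_d) g E : (forall i, Om (xs i)) ->
  (forall x, Om x -> `|g x| <= E) ->
  cubature w xs (fun x => g x ^+ 2) <= (\sum_i w i) * E ^+ 2.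
Proof.
move=> xsOm gE; rewrite /cubature mulr_suml; apply: ler_sum => i _.
by rewrite ler_wpM2l // sqr_le_of_norm_le // gE.
Qed.

End Cubature.

Section BestApproximation.
Variables (R : realType) (d n : nat) (Om : set 'rV[R]_d).

Definition unif_dist (f p : 'rV[R]_d -> R) := sup [set `|f x - p x| | x in Om].

Lemma unif_dist_ge f p x : bounded_mfun Om (fun x => f x - p x) -> Om x ->
  `|f x - p x| <= unif_dist f p.
Proof.
move=> [_ [M fpM]] Omx; apply: ub_le_sup; last by exists x.
by exists M => _ [y /fpM ? <-].
Qed.

Lemma unif_dist_ge0 f p : Om !=set0 -> bounded_mfun Om (fun x => f x - p x) ->
  0 <= unif_dist f p.
Proof. by move=> [x Omx] bfp; exact: le_trans (unif_dist_ge bfp Omx). Qed.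

Lemma best_approx_err_ge0 f : compact Om -> Om !=set0 -> bounded_mfun Om f ->
  0 <= best_approx_err n Om f.
Proof.
move=> Om_compact Om_neq0 bf; apply: lb_le_inf.
  by exists (unif_dist f (fun=> 0)), (fun=> 0) => //; exact: polys0.
move=> _ [p /(bounded_mfun_poly Om_compact) bp <-].
exact/unif_dist_ge0/bounded_mfunB.
Qed.

Lemma le_best_approx_err (err C : R) f : 0 < C ->
  (forall p, polys n p -> err <= C * unif_dist f p) ->
  err <= C * best_approx_err n Om f.
Proof.
move=> C_gt0 errC; rewrite -ler_pdivrMl //; apply: lb_le_inf.
  by exists (unif_dist f (fun=> 0)), (fun=> 0) => //; exact: polys0.
by move=> _ [p /errC pC <-]; rewrite ler_pdivrMl.
Qed.

End BestApproximation.

Section WeightedLeastSquares.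
Variables (R : realType) (d : nat) (Om : set 'rV[R]_d)
  (mu : {measure set (Rd R d) -> \bar R}) (n M k : nat)
  (w : 'I_M -> R) (xs : 'I_M -> 'rV[R]_d) (phi : 'I_k -> 'rV[R]_d -> R) (A B : R).
Hypotheses (Om_compact : compact Om) (mu_Om_gt0 : (0 < mu Om)%E)
  (mu_Om_fin : (mu Om < +oo)%E)
  (xsOm : forall i, Om (xs i)) (w_gt0 : forall i, 0 < w i)
  (phi_poly : forall j, polys n (phi j))
  (phi_orthonormal : forall i j,
     Rintegral mu Om (fun x => phi i x * phi j x) = (i == j)%:R)
  (phi_span : forall p, polys n p ->
     exists c : 'I_k -> R, p = fun x => \sum_(j < k) c j * phi j x)
  (A_gt0 : 0 < A)
  (cubature_equiv : forall p, polys n p ->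
     A * L2norm mu Om p ^+ 2 <= cubature w xs (fun x => p x ^+ 2) /\
     cubature w xs (fun x => p x ^+ 2) <= B * L2norm mu Om p ^+ 2).

Local Notation G := (gram w xs phi).
Local Notation m := (fine (mu Om)).
Local Notation wls := (wls w xs phi).
Let Om_measurable : measurable (Om : set (Rd R d)) := compact_measurable Om_compact.
Let w_ge0 i : 0 <= w i := ltW (w_gt0 i).

Definition lincomb (c : 'rV[R]_k) x := \sum_j c 0 j * phi j x.

Lemma lincomb_poly c : polys n (lincomb c).
Proof. exact: polys_lincomb. Qed.

Lemma poly_lincomb p : polys n p -> exists c, p = lincomb c.
Proof.
move=> /phi_span [c ->]; exists (\row_j c j).
by apply/funext => x; apply: eq_bigr => j _; rewrite mxE.
Qed.

Lemma lincombD u v x : lincomb (u + v) x = lincomb u x + lincomb v x.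
Proof. by rewrite /lincomb -big_split; apply: eq_bigr => j _; rewrite mxE mulrDl. Qed.

Lemma lincomb_sqrE c x :
  lincomb c x ^+ 2 = \sum_i \sum_j (c 0 i * c 0 j) * (phi i x * phi j x).
Proof.
rewrite /lincomb expr2 mulr_suml; apply: eq_bigr => i _; rewrite mulr_sumr.
by apply: eq_bigr => j _; ring.
Qed.

Lemma Rintegral_lincomb_sqr c :
  Rintegral mu Om (fun x => lincomb c x ^+ 2) = sqnorm c.
Proof.
have bphi i j : bounded_mfun Om (fun x => phi i x * phi j x).
  by apply: bounded_mfunM; exact: bounded_mfun_poly.
have bZphi i j a : bounded_mfun Om (fun x => a * (phi i x * phi j x)).
  by apply: bounded_mfunM => //; exact: bounded_mfun_cst.
have int_phi i j := bounded_mfun_integrable Om_compact mu_Om_fin (bphi i j).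
under eq_fun do rewrite lincomb_sqrE.
rewrite Rintegral_sum //; last by move=> i; exact: bounded_mfun_sum.
apply: eq_bigr => i _; rewrite Rintegral_sum // (bigD1 i) //= big1 => [|j ji].
  by rewrite RintegralZl // phi_orthonormal eqxx mulr1 addr0 expr2.
by rewrite RintegralZl // phi_orthonormal eq_sym (negbTE ji) mulr0.
Qed.

Lemma cubature_lincomb_sqr c : cubature w xs (fun x => lincomb c x ^+ 2) = qform G c.
Proof.
under eq_fun do rewrite lincomb_sqrE.
rewrite cubature_sum /qform /bform mxE.
under [RHS]eq_bigr => j _ do rewrite !mxE mulr_suml.
rewrite [RHS]exchange_big /=; apply: eq_bigr => i _; rewrite cubature_sum.
by apply: eq_bigr => j _; rewrite cubatureZ !mxE; ring.
Qed.

Lemma gram_sym : G^T = G.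
Proof.
apply/matrixP => i j; rewrite !mxE /cubature; apply: eq_bigr => l _.
by rewrite [phi i _ * _]mulrC.
Qed.

Lemma gram_qform_ge c : A * sqnorm c <= qform G c.
Proof.
have [+ _] := cubature_equiv (lincomb_poly c).
by rewrite L2norm_sqr Rintegral_lincomb_sqr cubature_lincomb_sqr.
Qed.

Lemma gram_qform_le c : qform G c <= B * sqnorm c.
Proof.
have [_] := cubature_equiv (lincomb_poly c).
by rewrite L2norm_sqr Rintegral_lincomb_sqr cubature_lincomb_sqr.
Qed.

Lemma k_gt0 : (0 < k)%N.
Proof.
rewrite lt0n; apply/eqP => k0.
have [c /(congr1 (fun f => f 0))] := poly_lincomb (@polys1 R d n).
rewrite /lincomb big1 => [/eqP|j]; first by rewrite oner_eq0.
by have := ltn_ord j; rewrite [X in (_ < X)%N]k0.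
Qed.

Lemma cond2_gram : cond2 G = rayleigh_max G / rayleigh_min G.
Proof. exact: cond2_rayleigh k_gt0 gram_sym gram_qform_ge gram_qform_le. Qed.

Lemma rayleigh_min_gram_gt0 : 0 < rayleigh_min G.
Proof. exact: lt_le_trans A_gt0 (ge_rayleigh_min k_gt0 gram_qform_ge). Qed.

Lemma gram_unit : G \in unitmx.
Proof.
rewrite -row_free_unit; apply: inj_row_free => v vG.
apply/eqP; apply: contraT => /sqnorm_gt0 v_gt0.
have := gram_qform_ge v; rewrite /qform /bform vG mul0mx mxE.
by rewrite pmulr_rle0 // leNgt v_gt0.
Qed.

Definition moments g : 'cV[R]_k := \col_j cubature w xs (fun y => g y * phi j y).

Lemma moments_lincomb a : moments (lincomb a) = G *m a^T.
Proof.
apply/matrixP => j z; rewrite !mxE.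
under eq_fun do rewrite /lincomb mulr_suml.
rewrite cubature_sum; apply: eq_bigr => i _.
rewrite !mxE [z]ord1 mulrC -cubatureZ; congr cubature; apply/funext => y; ring.
Qed.

Lemma momentsB f g : moments (fun y => f y - g y) = moments f - moments g.
Proof.
apply/matrixP => j z; rewrite !mxE -cubatureB.
by congr cubature; apply/funext => y; rewrite mulrBl.
Qed.

Lemma wlsE f : wls f = lincomb (invmx G *m moments f)^T.
Proof. by apply/funext => y; apply: eq_bigr => j _; rewrite [in RHS]mxE. Qed.

Lemma wls_split f p : polys n p -> wls f = fun y => p y + wls (fun y => f y - p y) y.
Proof.
move=> /poly_lincomb [a ->]; rewrite !wlsE momentsB moments_lincomb.
rewrite mulmxBr mulKmx ?gram_unit //; apply/funext => y.
by rewrite -lincombD linearB /= trmxK addrC subrK.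
Qed.

Lemma qform_wls g :
  qform G (invmx G *m moments g)^T = cubature w xs (fun y => g y * wls g y).
Proof.
rewrite wlsE /qform /bform trmxK -mulmxA mulKVmx ?gram_unit // mxE.
have -> : (fun y => g y * lincomb (invmx G *m moments g)^T y) =
    (fun y => \sum_j g y * ((invmx G *m moments g)^T 0 j * phi j y)).
  by apply/funext => y; rewrite /lincomb mulr_sumr.
rewrite cubature_sum; apply: eq_bigr => j _; rewrite !mxE -cubatureZ.
by congr cubature; apply/funext => y; ring.
Qed.

(* The cubature rule defines a semi-inner product in which wls is the
   orthogonal projection onto the polynomials, hence a contraction. *)
Lemma cubature_wls_sqr_le g :
  cubature w xs (fun y => wls g y ^+ 2) <= cubature w xs (fun y => g y ^+ 2).
Proof.
set q := wls g.
have gq : cubature w xs (fun y => g y * q y) = cubature w xs (fun y => q y ^+ 2).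
  by rewrite /q -qform_wls wlsE cubature_lincomb_sqr.
have := cubature_sqr_ge0 xs w_ge0 (fun y => g y - q y).
have -> : cubature w xs (fun y => (g y - q y) ^+ 2) =
    cubature w xs (fun y => g y ^+ 2) - 2 * cubature w xs (fun y => g y * q y)
    + cubature w xs (fun y => q y ^+ 2).
  by rewrite /cubature !mulr_sumr -sumrB -big_split /=; apply: eq_bigr => i _; ring.
rewrite gq; lra.
Qed.

Lemma L2norm_wls_le g E rho : 0 < rho -> (forall v, rho * sqnorm v <= qform G v) ->
  0 <= E -> (forall x, Om x -> `|g x| <= E) ->
  L2norm mu Om (wls g) <= Num.sqrt ((\sum_i w i) / rho) * E.
Proof.
move=> rho_gt0 G_ge E_ge0 gE; apply: sqrtr_le_mul => //.
  by rewrite divr_ge0 ?sumr_ge0 // ltW.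
rewrite wlsE Rintegral_lincomb_sqr mulrAC ler_pdivlMr // mulrC.
apply: le_trans (G_ge _) _; rewrite -cubature_lincomb_sqr -wlsE.
exact: le_trans (cubature_wls_sqr_le g) (cubature_sqr_le w_ge0 xsOm gE).
Qed.

Lemma wls_err_le f p E rho : bounded_mfun Om f -> polys n p ->
  0 <= E -> (forall x, Om x -> `|f x - p x| <= E) ->
  0 < rho -> (forall v, rho * sqnorm v <= qform G v) ->
  L2norm mu Om (fun x => f x - wls f x) <=
    (Num.sqrt m + Num.sqrt ((\sum_i w i) / rho)) * E.
Proof.
move=> bf p_poly E_ge0 fpE rho_gt0 G_ge.
have bfp := bounded_mfunB bf (bounded_mfun_poly Om_compact p_poly).
have bwls : bounded_mfun Om (wls (fun y => f y - p y)).
  by rewrite wlsE; exact: bounded_mfun_poly (lincomb_poly _).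
rewrite (wls_split f p_poly).
have -> : (fun x => f x - (p x + wls (fun y => f y - p y) x)) =
    (fun x => (f x - p x) - wls (fun y => f y - p y) x).
  by apply/funext => x; ring.
rewrite mulrDl; apply: le_trans (L2normB_le Om_compact mu_Om_fin bfp bwls) _.
by rewrite lerD ?L2norm_le_sup ?L2norm_wls_le.
Qed.

Lemma sum_weights_le : \sum_i w i <= rayleigh_max G * m.
Proof.
have [c one_c] := poly_lincomb (@polys1 R d n).
have -> : \sum_i w i = qform G c.
  rewrite -cubature_lincomb_sqr -one_c /cubature.
  by apply: eq_bigr => i _; rewrite expr1n mulr1.
have -> : m = sqnorm c.
  rewrite -Rintegral_lincomb_sqr -one_c.
  by under eq_fun do rewrite expr1n; rewrite Rintegral_cst // mul1r.
exact: rayleigh_max_ge gram_qform_le c.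
Qed.

Lemma m_gt0 : 0 < m.
Proof. by apply: fine_gt0; rewrite mu_Om_gt0 mu_Om_fin. Qed.

Lemma Om_neq0 : Om !=set0.
Proof.
apply/set0P/negP => /eqP Om0.
by move: mu_Om_gt0; rewrite Om0 measure0 ltxx.
Qed.

Lemma wls_err_le_unif_dist f rho C : {within Om, continuous f} ->
  0 < rho -> (forall v, rho * sqnorm v <= qform G v) -> 0 < C ->
  Num.sqrt m + Num.sqrt ((\sum_i w i) / rho) <= C ->
  L2norm mu Om (fun x => f x - wls f x) <= C * best_approx_err n Om f.
Proof.
move=> f_cont rho_gt0 G_ge C_gt0 C_ge.
have bf := bounded_mfun_within Om_compact f_cont.
apply: le_best_approx_err => // p p_poly.
have bfp := bounded_mfunB bf (bounded_mfun_poly Om_compact p_poly).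
have dist_ge0 := unif_dist_ge0 Om_neq0 bfp.
apply: le_trans (wls_err_le bf p_poly dist_ge0 _ rho_gt0 G_ge) _.
  by move=> x; exact: unif_dist_ge.
exact: ler_wpM2r.
Qed.

Lemma wls_err_le_cond2 f : {within Om, continuous f} ->
  L2norm mu Om (fun x => f x - wls f x) <=
    (1 + Num.sqrt (cond2 G)) * Num.sqrt m * best_approx_err n Om f.
Proof.
move=> f_cont; have rmin_gt0 := rayleigh_min_gram_gt0.
have rmax_ge0 : 0 <= rayleigh_max G.
  apply: le_trans (ltW rmin_gt0) _.
  exact: rayleigh_min_le_max k_gt0 gram_sym gram_qform_ge gram_qform_le.
have [m_ge0 rmin_ge0] := (ltW m_gt0, ltW rmin_gt0).
apply: wls_err_le_unif_dist (rayleigh_min_le gram_qform_ge) _ _ => //.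
  by rewrite mulr_gt0 ?sqrtr_gt0 ?m_gt0 // ltr_wpDr ?sqrtr_ge0.
rewrite mulrDl mul1r lerD2l cond2_gram -sqrtrM ?divr_ge0 //.
rewrite ler_sqrt ?mulr_ge0 ?divr_ge0 ?invr_ge0 // mulrAC.
by rewrite ler_wpM2r ?invr_ge0 ?sum_weights_le.
Qed.

Lemma wls_err_le_exact f : {within Om, continuous f} -> \sum_i w i = m ->
  L2norm mu Om (fun x => f x - wls f x) <=
    (1 + (Num.sqrt A)^-1) * Num.sqrt m * best_approx_err n Om f.
Proof.
move=> f_cont w_exact; apply: wls_err_le_unif_dist gram_qform_ge _ _ => //.
  by rewrite mulr_gt0 ?sqrtr_gt0 ?m_gt0 // ltr_wpDr ?invr_ge0 ?sqrtr_ge0.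
rewrite w_exact sqrtrM ?invr_ge0 ?(ltW m_gt0) ?(ltW A_gt0) // sqrtrV ?(ltW A_gt0) //.
by rewrite mulrDl mul1r mulrC.
Qed.

Lemma cond2_gram_le eta : `|A - 1| <= eta -> `|B - 1| <= eta -> eta < 1 ->
  cond2 G <= (1 + eta) / (1 - eta).
Proof.
move=> A_eta B_eta eta_lt1; have eta_ge0 := le_trans (normr_ge0 _) A_eta.
move: A_eta B_eta; rewrite !ler_norml => /andP[A_ge _] /andP[_ B_le].
have rmin_ge := ge_rayleigh_min k_gt0 gram_qform_ge.
have rmax_le := rayleigh_max_le k_gt0 gram_qform_le.
rewrite cond2_gram ler_pdivrMr ?rayleigh_min_gram_gt0 // mulrAC ler_pdivlMr; last by lra.
have rmax_eta : rayleigh_max G * (1 - eta) <= (1 + eta) * (1 - eta).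
  by rewrite ler_wpM2r; lra.
have rmin_eta : (1 + eta) * (1 - eta) <= (1 + eta) * rayleigh_min G.
  by rewrite ler_wpM2l; lra.
exact: le_trans rmax_eta rmin_eta.
Qed.

End WeightedLeastSquares.

Theorem proposition1 (R : realType) (d : nat) (Om : set 'rV[R]_d)
  (mu : {measure set (Rd R d) -> \bar R}) (n M k : nat)
  (w : 'I_M -> R) (xs : 'I_M -> 'rV[R]_d) (phi : 'I_k -> 'rV[R]_d -> R) (A B : R) :
  compact Om ->
  (0 < mu Om)%E -> (mu Om < +oo)%E ->
  (forall i, Om (xs i)) -> (forall i, 0 < w i) ->
  (forall j, @polys R d n (phi j)) ->
  (forall i j, Rintegral mu Om (fun x => phi i x * phi j x) = (i == j)%:R) ->
  (forall p, @polys R d n p -> exists c : 'I_k -> R, p = fun x => \sum_(j < k) c j * phi j x) ->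
  0 < A -> 0 < B ->
  (forall p, @polys R d n p ->
     A * L2norm mu Om p ^+ 2 <= cubature w xs (fun x => p x ^+ 2) /\
     cubature w xs (fun x => p x ^+ 2) <= B * L2norm mu Om p ^+ 2) ->
  Num.max `|A - 1| `|B - 1| < 1 ->
  let eta := Num.max `|A - 1| `|B - 1| in
  let G := gram w xs phi in
  forall f : 'rV[R]_d -> R, {within Om, continuous f} ->
  let err := L2norm mu Om (fun x => f x - wls w xs phi f x) in
  let En := best_approx_err n Om f in
  let m := fine (mu Om) in
  (err <= (1 + Num.sqrt (cond2 G)) * Num.sqrt m * En /\
   (1 + Num.sqrt (cond2 G)) * Num.sqrt m * En
     <= (1 + Num.sqrt ((1 + eta) / (1 - eta))) * Num.sqrt m * En) /\
  (\sum_(i < M) w i = m ->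
     err <= (1 + (Num.sqrt A)^-1) * Num.sqrt m * En /\
     (1 + (Num.sqrt A)^-1) * Num.sqrt m * En
       <= (1 + (Num.sqrt (1 - eta))^-1) * Num.sqrt m * En).
Proof.
move=> Om_compact mu_Om_gt0 mu_Om_fin xsOm w_gt0 phi_poly phi_orthonormal phi_span
  A_gt0 _ cubature_equiv eta_lt1 eta G f f_cont err En m.
rewrite -/eta in eta_lt1.
have En_ge0 : 0 <= En := best_approx_err_ge0 n Om_compact (Om_neq0 mu_Om_gt0)
  (bounded_mfun_within Om_compact f_cont).
have scale_le (a b : R) : a <= b -> a * Num.sqrt m * En <= b * Num.sqrt m * En.
  by move=> ab; rewrite ler_wpM2r // ler_wpM2r ?sqrtr_ge0.
have A_eta : `|A - 1| <= eta by rewrite le_max lexx.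
have B_eta : `|B - 1| <= eta by rewrite le_max lexx orbT.
have eta_ge0 : 0 <= eta := le_trans (normr_ge0 _) A_eta.
have A_ge : 1 - eta <= A by move: A_eta; rewrite ler_norml => /andP[]; lra.
split; first split.
- exact: (wls_err_le_cond2 Om_compact mu_Om_gt0 mu_Om_fin xsOm w_gt0 phi_poly
    phi_orthonormal phi_span A_gt0 cubature_equiv f_cont).
- apply: scale_le; rewrite lerD2l ler_sqrt; last by apply: divr_ge0; lra.
  exact: (cond2_gram_le Om_compact mu_Om_fin phi_poly phi_orthonormal phi_span
    A_gt0 cubature_equiv A_eta B_eta eta_lt1).
- move=> w_exact; split.
  + exact: (wls_err_le_exact Om_compact mu_Om_gt0 mu_Om_fin xsOm w_gt0 phi_poly
      phi_orthonormal phi_span A_gt0 cubature_equiv f_cont w_exact).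
  + apply: scale_le; rewrite lerD2l lef_pV2 ?posrE ?sqrtr_gt0 ?ler_sqrt //; lra.
Qed.
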